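(* Let $N\in\mathbb{N}$ and $X_1,X_2\subseteq[N]$ with $|X_1|\cdot|X_2|=N$, $X=(X_1,X_2)$, and let $\mu=\mathbb{E}_{\sigma\sim\mathcal D_X}[|X_\sigma|]$. Then for every real $u\ge 6\mu$, $$\Pr_{\pi\sim\mathcal D_X}\big[|X_\pi|\ge \mu+u\big]\le 3\exp\!\left(-\tfrac{4u}{9}\right).$$
   Context: For $\pi\in S_N$, $X_\pi=\{(i,j): i\in X_1,\ j\in X_2,\ \pi(i)=j\}$ is the set of $X$-pairs of $\pi$. The distribution $\mathcal{D}_X$ on $S_N$ is defined by $\Pr_{\Phi\sim\mathcal D_X}[\Phi=\varphi]=|X_\varphi|/\sum_{\sigma\in S_N}|X_\sigma|$ for $\varphi\in S_N$. *)

From HB Require Import structures.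
From mathcomp Require Import all_boot all_order all_algebra all_fingroup.
From mathcomp Require Import all_classical all_reals.
From mathcomp Require Import sequences exp.
Set Implicit Arguments. Unset Strict Implicit. Unset Printing Implicit Defensive.
Import Order.TTheory GRing.Theory Num.Theory.
Local Open Scope ring_scope.

(* [N] = 'I_N (elements 0..N-1); S_N = {perm 'I_N}. *)

Definition Xpairs (N : nat) (X1 X2 : {set 'I_N}) (pi : {perm 'I_N}) : nat :=
  #|[set i in X1 | pi i \in X2]|.

Definition DX (R : realType) (N : nat) (X1 X2 : {set 'I_N}) (phi : {perm 'I_N}) : R :=
  (Xpairs X1 X2 phi)%:R / (\sum_(sigma : {perm 'I_N}) (Xpairs X1 X2 sigma)%:R).

Definition muX (R : realType) (N : nat) (X1 X2 : {set 'I_N}) : R :=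
  \sum_(sigma : {perm 'I_N}) DX R X1 X2 sigma * (Xpairs X1 X2 sigma)%:R.

Definition PrX_ge (R : realType) (N : nat) (X1 X2 : {set 'I_N}) (t : R) : R :=
  \sum_(pi : {perm 'I_N} | t <= (Xpairs X1 X2 pi)%:R) DX R X1 X2 pi.

Arguments DX R {N} X1 X2 phi.
Arguments muX R {N} X1 X2.
Arguments PrX_ge R {N} X1 X2 t.

(* Since |X1| |X2| = N, the weights |X_s| sum to N!, so D_X(s) = |X_s| / N!.
   Double counting the triples (s, A, B) with A <= X1, B <= X2, |A| = |B| = m
   and s(A) = B gives sum_s C(|X_s|, m) = C(|X1|, m) C(|X2|, m) N! / C(N, m),
   which is at most N! / m! because a^(m) b^(m) <= (ab)^(m) for falling
   factorials.  As |X_s| <= m C(|X_s|, m) whenever |X_s| >= m, the D_X-mass of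
   {|X_s| >= m} is at most m / m! = 1 / (m-1)!, and 1 / (m-1)! <= 3 e^(-4m/9)
   because e^(4/9) <= (9/7)^2.  Taking m = ceil (mu + u) concludes; of the
   hypothesis u >= 6 mu only u >= 0 is needed. *)

From mathcomp Require Import all_boot all_order all_algebra all_fingroup.
From mathcomp Require Import reals.
From mathcomp Require Import sequences exp.
From mathcomp Require Import zify ring lra.
Set Implicit Arguments.
Unset Strict Implicit.
Unset Printing Implicit Defensive.
Import Order.TTheory GRing.Theory Num.Theory.

Local Open Scope nat_scope.

Lemma sum_nat_of_bool (I : finType) (P : pred I) : \sum_i P i = #|[set i | P i]|.
Proof. by rewrite -sum1dep_card [RHS]big_mkcond. Qed.

Lemma leq_ffactM a b m : a ^_ m * b ^_ m <= (a * b) ^_ m.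
Proof.
elim: m => // m IH; rewrite !ffactnSr mulnACA.
by apply: leq_mul IH _; nia.
Qed.

Lemma leq_binM a b m : 'C(a, m) * 'C(b, m) * m`! <= 'C(a * b, m).
Proof.
by rewrite -(leq_pmul2r (fact_gt0 m)) -mulnA mulnACA !bin_ffact leq_ffactM.
Qed.

Lemma leq_mul_bin k m : 0 < m <= k -> k <= m * 'C(k, m).
Proof.
case: m => // m /= lemk; rewrite -mul_bin_diag leq_pmulr // bin_gt0.
by rewrite -ltnS (ltn_predK lemk).
Qed.

Section PermutedSets.
Variable T : finType.
Implicit Types (A B C : {set T}) (s : {perm T}).

Lemma imset_permM s t A : (s * t)%g @: A = t @: (s @: A).
Proof. by rewrite -imset_comp; apply: eq_imset => x; rewrite permM. Qed.

Lemma mem_imset_perm s A x : (x \in s @: A) = (s^-1%g x \in A).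
Proof. by rewrite -{1}[s]invgK im_permV inE. Qed.

Lemma exists_perm_imset B C : #|B| = #|C| -> exists s, s @: B = C.
Proof.
have [n] := ubnP #|B :\: C|; elim: n => // n IH in B * => ltBCn eqBC.
have [/eqP|[x BCx]] := set_0Vmem (B :\: C).
  rewrite setD_eq0 => subBC; exists 1%g; rewrite imset_perm1.
  by apply/eqP; rewrite eqEcard subBC eqBC leqnn.
have [y CBy] : exists y, y \in C :\: B.
  apply/card_gt0P; have : 0 < #|B :\: C| by apply/card_gt0P; exists x.
  have := cardsID C B; have := cardsID B C.
  by rewrite setIC; lia.
move: BCx CBy; rewrite !inE => /andP[Cx' Bx] /andP[By' Cy].
pose t := tperm x y.
have ltBC : #|t @: B :\: C| < #|B :\: C|.
  apply: proper_card; apply/properP; split.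
    apply/subsetP => z; rewrite !inE mem_imset_perm tpermV.
    by case: tpermP => [->|->|_ _ ->]; rewrite ?(negbTE By') ?Cy ?andbF.
  exists x; first by rewrite inE Cx' Bx.
  by rewrite inE mem_imset_perm tpermV tpermL (negbTE By') andbF.
have [s tBC] := IH _ (leq_trans ltBC ltBCn) (etrans (card_imset _ perm_inj) eqBC).
by exists (t * s)%g; rewrite imset_permM.
Qed.

Lemma card_perm_imset_eq A B : #|A| = #|B| ->
  #|[set s : {perm T} | s @: A == B]| * 'C(#|T|, #|A|) = #|T|`!.
Proof.
move=> eqAB; pose fiber B0 := [set s : {perm T} | s @: A == B0].
have le_fiber B1 B2 : #|B1| = #|A| -> #|B2| = #|A| -> #|fiber B1| <= #|fiber B2|.
  move=> eqB1 eqB2; have [t tB12] := exists_perm_imset (etrans eqB1 (esym eqB2)).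
  rewrite -(card_imset _ (mulIg t)); apply/subset_leq_card/subsetP => _ /imsetP[s + ->].
  by rewrite !inE imset_permM => /eqP->; rewrite tB12.
have all_perms : #|T|`! = \sum_(s : {perm T}) 1.
  rewrite sum1_card -cardsT -card_perm.
  by apply: eq_card => s; rewrite [RHS]/=; apply/subsetP => z _; rewrite inE.
rewrite all_perms (partition_big (fun s => s @: A) (fun B0 => #|B0| == #|A|)) /=; last first.
  by move=> s _; rewrite card_imset //; apply: perm_inj.
rewrite mulnC -card_draws -sum_nat_cond_const; apply: eq_bigr => B0 /eqP eqB0.
by rewrite sum1dep_card; apply/eqP; rewrite eqn_leq !le_fiber.
Qed.

Lemma sum_perm_binom_matched (X1 X2 : {set T}) m :
  \sum_(s : {perm T}) 'C(#|[set i in X1 | s i \in X2]|, m) * 'C(#|T|, m)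
  = 'C(#|X1|, m) * 'C(#|X2|, m) * #|T|`!.
Proof.
pose DA := [set A : {set T} | A \subset X1 & #|A| == m].
pose DB := [set B : {set T} | B \subset X2 & #|B| == m].
have image_in_DB A s : A \in DA ->
    \sum_(B in DB) (s @: A == B : nat) = (s @: A \subset X2 : nat).
  rewrite inE => /andP[_ /eqP cardA].
  have [sAX2|nsAX2] := boolP (s @: A \subset X2); last first.
    rewrite big1 // => B; rewrite inE => /andP[BX2 _].
    by case: eqP => // eqAB; rewrite eqAB BX2 in nsAX2.
  rewrite (bigD1 (s @: A)) ?big1 /=; first by rewrite eqxx.
    by move=> B /andP[_]; rewrite eq_sym => /negbTE->.
  by rewrite inE sAX2 (card_imset _ perm_inj) cardA eqxx.
have binom_matched s : 'C(#|[set i in X1 | s i \in X2]|, m)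
    = \sum_(A in DA) \sum_(B in DB) (s @: A == B : nat).
  rewrite -cards_draws [RHS]big_mkcond /= -sum_nat_of_bool; apply: eq_bigr => A _.
  have -> : [set i in X1 | s i \in X2] = X1 :&: s @^-1: X2 by apply/setP => i; rewrite !inE.
  rewrite subsetI -sub_imset_pre inE.
  case: ifP => [DA_A|nDA_A]; last by rewrite andbAC nDA_A.
  by rewrite image_in_DB ?inE //; case/andP: DA_A => -> ->; rewrite andbT.
have fibers A : A \in DA ->
    \sum_(B in DB) (\sum_(s : {perm T}) (s @: A == B : nat)) * 'C(#|T|, m)
    = 'C(#|X2|, m) * #|T|`!.
  rewrite inE => /andP[_ /eqP cardA].
  rewrite -cards_draws -sum_nat_const; apply: eq_bigr => B; rewrite inE => /andP[_ /eqP cardB].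
  by rewrite sum_nat_of_bool -cardA card_perm_imset_eq // cardA cardB.
rewrite -big_distrl /= (eq_bigr _ (fun s _ => binom_matched s)) exchange_big big_distrl /=.
under eq_bigr => A _ do rewrite exchange_big big_distrl /=.
by rewrite (eq_bigr _ fibers) sum_nat_const cards_draws mulnA.
Qed.

Lemma sum_perm_card_matched (X1 X2 : {set T}) :
  #|X1| * #|X2| = #|T| -> 0 < #|T| ->
  \sum_(s : {perm T}) #|[set i in X1 | s i \in X2]| = #|T|`!.
Proof.
move=> cardX Tgt0; have := sum_perm_binom_matched X1 X2 1.
rewrite -big_distrl /= !bin1 cardX; under eq_bigr do rewrite bin1.
by rewrite mulnC => /eqP; rewrite eqn_pmul2l // => /eqP.
Qed.

Lemma leq_fact_sum_perm_binom_matched (X1 X2 : {set T}) m :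
  #|X1| * #|X2| = #|T| ->
  m`! * \sum_(s : {perm T}) 'C(#|[set i in X1 | s i \in X2]|, m) <= #|T|`!.
Proof.
move=> cardX; have [lemT|ltTm] := leqP m #|T|; last first.
  rewrite big1 ?muln0 // => s _; apply: bin_small.
  exact: leq_ltn_trans (max_card _) ltTm.
have binTgt0 : 0 < 'C(#|T|, m) by rewrite bin_gt0.
have := leq_binM #|X1| #|X2| m; rewrite cardX => leCm.
rewrite -(leq_pmul2r binTgt0) -mulnA big_distrl /= sum_perm_binom_matched.
by rewrite (mulnC m`!) -mulnA (mulnC #|T|`!) mulnA [X in _ <= X]mulnC leq_mul2r leCm orbT.
Qed.

End PermutedSets.

Local Open Scope ring_scope.

Section ExpBounds.
Variable R : realType.

Lemma expR_le_inv_subr (x : R) : x < 1 -> expR x <= (1 - x)^-1.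
Proof.
move=> x_lt1; rewrite -[expR x]invrK lef_pV2 ?posrE ?invr_gt0 ?expR_gt0 ?subr_gt0 //.
by rewrite -expRN expR_ge1Dx.
Qed.

Lemma exprS_le_3fact (q : R) k : 0 <= q <= 81 / 49 -> q ^+ k.+1 <= 3 * k`!%:R.
Proof.
case/andP=> q_ge0 q_le; elim: k => [|k IH]; first by rewrite expr1 fact0; lra.
have fact_ge1 : 1 <= k`!%:R :> R by rewrite ler1n fact_gt0.
rewrite exprS factS natrM.
case: k => [|k] in IH fact_ge1 *; first by rewrite expr1 fact0; nra.
have k_ge2 : 2 <= k.+2%:R :> R by rewrite (ler_nat R 2).
have := exprn_ge0 k.+2 q_ge0; nra.
Qed.

Lemma div_fact_le_expR (m : nat) : (0 < m)%N ->
  m%:R / m`!%:R <= 3 * expR (- (4 * m%:R / 9)) :> R.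
Proof.
case: m => // k _; set q := expR (4 / 9 : R).
have q_le : q <= 81 / 49.
  have e29 : expR (2 / 9 : R) <= 9 / 7.
    have -> : 9 / 7 = (1 - 2 / 9 : R)^-1 by field.
    by apply: expR_le_inv_subr; lra.
  have e29_ge0 := expR_ge0 (2 / 9 : R).
  rewrite /q (_ : 4 / 9 = 2 / 9 + 2 / 9); last by lra.
  rewrite expRD (_ : 81 / 49 = 9 / 7 * (9 / 7)); last by lra.
  exact: ler_pM.
have q_pow : q ^+ k.+1 <= 3 * k`!%:R by apply: exprS_le_3fact; rewrite q_le expR_ge0.
rewrite (_ : 4 * _ / 9 = k.+1%:R * (4 / 9)); last by lra.
rewrite expRN expRM_natl -/q factS natrM invfM mulrA divff ?mul1r ?pnatr_eq0 //.
rewrite ler_pdivlMr ?exprn_gt0 ?expR_gt0 // mulrC ler_pdivrMr ?ltr0n ?fact_gt0 //.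
Qed.

End ExpBounds.

Section TailBound.
Variables (R : realType) (N : nat) (X1 X2 : {set 'I_N}).

Lemma muX_ge0 : 0 <= muX R X1 X2.
Proof.
by apply: sumr_ge0 => s _; rewrite mulr_ge0 // divr_ge0 // sumr_ge0.
Qed.

(* Only positive [k] are constrained: a permutation with no X-pair has D_X-weight 0. *)
Lemma PrX_ge_le_div_fact (t : R) m : (#|X1| * #|X2|)%N = N -> (0 < m)%N ->
    (forall k : nat, (0 < k)%N -> t <= k%:R -> (m <= k)%N) ->
  PrX_ge R X1 X2 t <= m%:R / m`!%:R.
Proof.
move=> cardX m_gt0 m_min; rewrite /PrX_ge /DX -mulr_suml.
(* For N = 0 the normalising sum is 0, so D_X is identically 0. *)
have [N0|N_gt0] := posnP N.
  rewrite big1 ?mul0r ?divr_ge0 // => s _; apply/eqP; rewrite pnatr_eq0 -leqn0.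
  by rewrite -N0 -[X in (_ <= X)%N]card_ord max_card.
have sum_Xpairs : \sum_s (Xpairs X1 X2 s)%:R = N`!%:R :> R.
  by rewrite -natr_sum /Xpairs sum_perm_card_matched ?card_ord.
rewrite sum_Xpairs.
have num : \sum_(s | t <= (Xpairs X1 X2 s)%:R) (Xpairs X1 X2 s)%:R
    <= (m * \sum_s 'C(Xpairs X1 X2 s, m))%:R :> R.
  rewrite big_distrr natr_sum [leRHS](bigID (fun s => t <= (Xpairs X1 X2 s)%:R)) /=.
  rewrite -[leLHS]addr0 lerD ?sumr_ge0 // ler_sum // => s t_le.
  have [->|x_gt0] := posnP (Xpairs X1 X2 s); first by rewrite mulr0n ler0n.
  by rewrite ler_nat leq_mul_bin // m_gt0 m_min.
rewrite ler_pdivrMr ?ltr0n ?fact_gt0 // mulrAC ler_pdivlMr ?ltr0n ?fact_gt0 //.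
apply: le_trans (ler_wpM2r (ler0n _ _) num) _.
rewrite -!natrM ler_nat -mulnA leq_mul2l mulnC; apply/orP; right.
by have := leq_fact_sum_perm_binom_matched m (etrans cardX (esym (card_ord N))); rewrite card_ord.
Qed.

End TailBound.

Theorem theorem3 (R : realType) (N : nat) (X1 X2 : {set 'I_N})
  (hcard : (#|X1| * #|X2|)%N = N) (u : R) (hu : 6 * muX R X1 X2 <= u) :
  PrX_ge R X1 X2 (muX R X1 X2 + u) <= 3 * expR (- (4 * u / 9)).
Proof.
have u_ge0 : 0 <= u by apply: le_trans hu; rewrite mulr_ge0 ?muX_ge0.
set t := muX R X1 X2 + u.
have t_ge_u : u <= t by rewrite /t lerDr muX_ge0.
have [n ceil_t] : exists n : nat, Num.ceil t = n%:Z.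
  by exists `|Num.ceil t|%N; rewrite gez0_abs // ceil_ge0; lra.
pose m := maxn 1 n.
have m_gt0 : (0 < m)%N by rewrite leq_max.
have m_min k : (0 < k)%N -> t <= k%:R -> (m <= k)%N.
  by move=> k_gt0 t_le; rewrite geq_max k_gt0 -lez_nat -ceil_t ceil_le_int.
have u_le_m : u <= m%:R.
  apply: le_trans t_ge_u (le_trans (ceil_ge t) _).
  by rewrite ceil_t ler_nat leq_max leqnn orbT.
apply: le_trans (PrX_ge_le_div_fact hcard m_gt0 m_min) _.
apply: le_trans (div_fact_le_expR _ m_gt0) _.
by rewrite ler_pM2l // ler_expR; lra.
Qed.
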